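(* Let $n\ge3$ and let $(S^n,g_0)$ be the round unit sphere $S^n\subset\mathbb{R}^{n+1}$, with $x^0,\dots,x^n$ the restrictions of the standard coordinates of $\mathbb{R}^{n+1}$. Then for all $u\in C^\infty(S^n)$, \[ \sum_{i=0}^n x^i\bigl(L_{\sigma_2}(x^iu,u,u) - x^iL_{\sigma_2}(u,u,u)\bigr) = \frac{n-1}{3}\,u\,\sigma_1(u), \] where $\sigma_1(u) := -\frac{n-4}{8}\Delta u^2 - |\nabla u|^2 + \frac n2\bigl(\frac{n-4}{4}\bigr)^2u^2$.
   Context: All geometric quantities are taken with respect to $g_0$: $\nabla$ gradient, $\delta$ divergence, $d$ exterior derivative, $\Delta=\delta d$ the (nonpositive) Laplacian. $L_{\sigma_2}$ is the symmetric trilinear differential operator (the polarization) whose diagonal is \[ L_{\sigma_2}(u,u,u) = \tfrac12\delta\bigl(|\nabla u|^2du\bigr) - \tfrac{n-4}{16}\bigl(u\Delta|\nabla u|^2 - \delta((\Delta u^2)du)\bigr) - \tfrac{n-1}{4}\bigl(\tfrac{n-4}{4}\bigr)^2 u\Delta u^2 + \tfrac{n(n-1)}{8}\bigl(\tfrac{n-4}{4}\bigr)^3u^3, \] i.e. $L_{\sigma_2}(u_1,u_2,u_3)$ is trilinear, symmetric in its three arguments, and agrees with the displayed expression when $u_1=u_2=u_3=u$. *)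

From Stdlib Require Import Reals List ClassicalEpsilon.
Open Scope R_scope.

(** Points of R^{n+1}: functions nat -> R; only coordinates 0..n are used
    (points we evaluate at have x k = 0 for k > n). *)
Definition Pt := nat -> R.

Definition upd (x : Pt) (i : nat) (t : R) : Pt :=
  fun k => if Nat.eqb k i then t else x k.

(** Partial derivative d/dx^i (the derivative, when it exists; junk 0-choice otherwise). *)
Definition pd (f : Pt -> R) (i : nat) (x : Pt) : R :=
  epsilon (inhabits 0)
    (fun l => derivable_pt_lim (fun t => f (upd x i t)) (x i) l).

Definition iter_pd (l : list nat) (f : Pt -> R) : Pt -> R :=
  fold_right (fun i F => pd F i) f l.

Definition cont_n (n : nat) (F : Pt -> R) : Prop :=
  forall x eps, 0 < eps -> exists delta, 0 < delta /\
    forall y, (forall k, (k <= n)%nat -> Rabs (y k - x k) < delta) ->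
              (forall k, (n < k)%nat -> y k = x k) ->
              Rabs (F y - F x) < eps.

Definition smooth (n : nat) (U : Pt -> R) : Prop :=
  forall l, Forall (fun i => (i <= n)%nat) l ->
    cont_n n (iter_pd l U) /\
    forall i x, (i <= n)%nat ->
      exists d, derivable_pt_lim (fun t => iter_pd l U (upd x i t)) (x i) d.

Definition dot (n : nat) (a b : Pt) : R := sum_f_R0 (fun i => a i * b i) n.

(** Gradient on the round sphere S^n (tangential projection of the ambient gradient);
    the formula is used as an ambient extension, evaluated on S^n. *)
Definition grad (n : nat) (f : Pt -> R) (x : Pt) : Pt :=
  fun i => pd f i x - sum_f_R0 (fun j => x j * pd f j x) n * x i.

(** Divergence on S^n of a tangent vector field V (given through an ambient extension):
    tr(DV) - <D_x V, x>. *)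
Definition div (n : nat) (V : Pt -> Pt) (x : Pt) : R :=
  sum_f_R0 (fun i => pd (fun y => V y i) i x) n
  - sum_f_R0 (fun i => sum_f_R0 (fun j => x i * x j * pd (fun y => V y i) j x) n) n.

(** Laplacian Delta = delta d = div grad (nonpositive) *)
Definition lap (n : nat) (f : Pt -> R) : Pt -> R := div n (grad n f).

Definition gsq (n : nat) (f : Pt -> R) (x : Pt) : R := dot n (grad n f x) (grad n f x).

Definition sq (f : Pt -> R) : Pt -> R := fun y => f y ^ 2.

Definition Lcub (n : nat) (u : Pt -> R) (x : Pt) : R :=
  let N := INR n in
  / 2 * div n (fun z i => gsq n u z * grad n u z i) x
  - (N - 4) / 16 * (u x * lap n (gsq n u) x
                    - div n (fun z i => lap n (sq u) z * grad n u z i) x)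
  - (N - 1) / 4 * ((N - 4) / 4) ^ 2 * (u x * lap n (sq u) x)
  + N * (N - 1) / 8 * ((N - 4) / 4) ^ 3 * u x ^ 3.

Definition fadd (f g : Pt -> R) : Pt -> R := fun y => f y + g y.

(** L_{sigma_2}(a,b,c): the symmetric trilinear polarization of Lcub *)
Definition L3 (n : nat) (a b c : Pt -> R) (x : Pt) : R :=
  / 6 * ( Lcub n (fadd a (fadd b c)) x
        - Lcub n (fadd a b) x - Lcub n (fadd a c) x - Lcub n (fadd b c) x
        + Lcub n a x + Lcub n b x + Lcub n c x ).

Definition sigma1 (n : nat) (u : Pt -> R) (x : Pt) : R :=
  let N := INR n in
  - ((N - 4) / 8) * lap n (sq u) x - gsq n u x + N / 2 * ((N - 4) / 4) ^ 2 * u x ^ 2.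

From Stdlib Require Import Reals List ClassicalEpsilon FunctionalExtensionality Lia.
Open Scope R_scope.

(* The cubic operator [Lcub u] is the diagonal of a trilinear form [Ltri]
   (obtained by expanding both divergences), so by polarization [L3] is the
   average of [Ltri] over the six orderings of its arguments.  Putting a factor
   [f] into one slot and subtracting [f] times the diagonal, the Leibniz rules
   for [grad] and [lap] leave a combination [mul_defect] of first and second
   derivatives of [f] whose coefficients only involve [u], [|grad u|^2] and
   [lap u].  For [f = x^i], weighted by [x^i] and summed over [i], these terms
   collapse on the sphere: [sum x^i grad x^i = 0] (tangency), [lap x^i = -n x^i],
   [sum x^i <grad <grad x^i, grad u>, grad u> = - |grad u|^2] and
   [sum x^i lap <grad x^i, grad u> = -2 lap u]. *)

Lemma sum_mul_l (a : nat -> R) c N :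
  sum_f_R0 (fun i => c * a i) N = c * sum_f_R0 a N.
Proof. induction N; simpl; [|rewrite IHN]; ring. Qed.

Lemma sum_kronecker (a : nat -> R) i N : (i <= N)%nat ->
  sum_f_R0 (fun j => a j * (if Nat.eqb j i then 1 else 0)) N = a i.
Proof.
  induction N as [|N IH]; intro Hi.
  - replace i with 0%nat by lia. simpl. ring.
  - rewrite tech5. destruct (Nat.eq_dec i (S N)) as [->|Hne].
    + rewrite Nat.eqb_refl, sum_eq_R0; [ring|].
      intros j Hj. replace (Nat.eqb j (S N)) with false by (symmetry; apply Nat.eqb_neq; lia). ring.
    + rewrite IH by lia. replace (Nat.eqb (S N) i) with false by (symmetry; apply Nat.eqb_neq; lia). ring.
Qed.

Lemma sum_mul_lincomb (a b d : nat -> R) c N :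
  sum_f_R0 (fun i => a i * (c * b i + d i)) N
  = c * sum_f_R0 (fun i => a i * b i) N + sum_f_R0 (fun i => a i * d i) N.
Proof. induction N; simpl; [|rewrite IHN]; ring. Qed.

Lemma sum_mul_scal (a b : nat -> R) c N :
  sum_f_R0 (fun i => a i * (c * b i)) N = c * sum_f_R0 (fun i => a i * b i) N.
Proof. induction N; simpl; [|rewrite IHN]; ring. Qed.

Lemma pd_eq F i y l :
  derivable_pt_lim (fun t => F (upd y i t)) (y i) l -> pd F i y = l.
Proof.
  intro Hl. apply (uniqueness_limite (fun t => F (upd y i t)) (y i)); [|exact Hl].
  apply (epsilon_spec (inhabits 0) (fun l => derivable_pt_lim (fun t => F (upd y i t)) (y i) l)).
  eauto.
Qed.

Lemma upd_id y i : upd y i (y i) = y.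
Proof. extensionality k. unfold upd. destruct (Nat.eqb_spec k i); subst; auto. Qed.

Lemma derivable_upd_coord y i j :
  derivable_pt_lim (fun t => upd y i t j) (y i) (if Nat.eqb j i then 1 else 0).
Proof.
  unfold upd. destruct (Nat.eqb j i).
  - apply derivable_pt_lim_id.
  - apply derivable_pt_lim_const.
Qed.

Section SphereCalculus.
Variable n : nat.

Definition pdiff (F : Pt -> R) : Prop :=
  forall i y, (i <= n)%nat -> derivable_pt_lim (fun t => F (upd y i t)) (y i) (pd F i y).

Lemma pdiff_intro F :
  (forall i y, (i <= n)%nat -> exists l, derivable_pt_lim (fun t => F (upd y i t)) (y i) l) ->
  pdiff F.
Proof. intros H i y Hi. destruct (H i y Hi) as [l Hl]. rewrite (pd_eq _ _ _ _ Hl). exact Hl. Qed.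

Section Leibniz.
Variables f g : Pt -> R.
Hypotheses (Hf : pdiff f) (Hg : pdiff g).

Lemma pd_add i y : (i <= n)%nat -> pd (fun y => f y + g y) i y = pd f i y + pd g i y.
Proof.
  intro Hi. apply pd_eq. exact (derivable_pt_lim_plus _ _ _ _ _ (Hf i y Hi) (Hg i y Hi)).
Qed.

Lemma pd_mul i y : (i <= n)%nat ->
  pd (fun y => f y * g y) i y = pd f i y * g y + f y * pd g i y.
Proof.
  intro Hi. apply pd_eq.
  pose proof (derivable_pt_lim_mult _ _ _ _ _ (Hf i y Hi) (Hg i y Hi)) as H.
  cbv beta in H. rewrite upd_id in H. exact H.
Qed.

Lemma pdiff_add : pdiff (fun y => f y + g y).
Proof.
  apply pdiff_intro. intros i y Hi. eexists.
  exact (derivable_pt_lim_plus _ _ _ _ _ (Hf i y Hi) (Hg i y Hi)).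
Qed.

Lemma pdiff_mul : pdiff (fun y => f y * g y).
Proof.
  apply pdiff_intro. intros i y Hi. eexists.
  exact (derivable_pt_lim_mult _ _ _ _ _ (Hf i y Hi) (Hg i y Hi)).
Qed.

End Leibniz.

Lemma pd_const c i : pd (fun _ => c) i = fun _ => 0.
Proof. extensionality y. apply pd_eq. apply derivable_pt_lim_const. Qed.

Lemma pd_coord j i : pd (fun y => y j) i = fun _ => if Nat.eqb j i then 1 else 0.
Proof. extensionality y. apply pd_eq. apply derivable_upd_coord. Qed.

Lemma pdiff_const c : pdiff (fun _ => c).
Proof. apply pdiff_intro. intros. eexists. apply derivable_pt_lim_const. Qed.

Lemma pdiff_coord j : pdiff (fun y => y j).
Proof. apply pdiff_intro. intros. eexists. apply derivable_upd_coord. Qed.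

(* Weaker than [smooth]: only the existence of partial derivatives of all
   orders is required, no continuity. *)
Fixpoint pdiffn (k : nat) (F : Pt -> R) : Prop :=
  match k with
  | O => pdiff F
  | S k => pdiff F /\ forall i, (i <= n)%nat -> pdiffn k (pd F i)
  end.

Definition pdiff_inf (F : Pt -> R) : Prop := forall k, pdiffn k F.

Lemma pdiffn_pred k F : pdiffn (S k) F -> pdiffn k F.
Proof.
  revert F; induction k as [|k IH]; intros F [HF Hpd]; [exact HF|].
  split; [exact HF|]. intros i Hi. apply IH, Hpd, Hi.
Qed.

Lemma pdiffn_const k c : pdiffn k (fun _ => c).
Proof.
  revert c; induction k as [|k IH]; intro c; [apply pdiff_const|].
  split; [apply pdiff_const|]. intros i _. rewrite pd_const. apply IH.
Qed.

Lemma pdiffn_coord k j : pdiffn k (fun y => y j).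
Proof.
  destruct k; [apply pdiff_coord|].
  split; [apply pdiff_coord|]. intros i _. rewrite pd_coord. apply pdiffn_const.
Qed.

Lemma pdiffn_add k f g : pdiffn k f -> pdiffn k g -> pdiffn k (fun y => f y + g y).
Proof.
  revert f g; induction k as [|k IH]; intros f g Hf Hg; [apply pdiff_add; auto|].
  destruct Hf as [Hf Hf'], Hg as [Hg Hg'].
  split; [apply pdiff_add; auto|]. intros i Hi.
  replace (pd (fun y => f y + g y) i) with (fun y => pd f i y + pd g i y)
    by (extensionality y; symmetry; apply pd_add; auto).
  apply IH; auto.
Qed.

Lemma pdiffn_mul k f g : pdiffn k f -> pdiffn k g -> pdiffn k (fun y => f y * g y).
Proof.
  revert f g; induction k as [|k IH]; intros f g Hf Hg; [apply pdiff_mul; auto|].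
  pose proof (pdiffn_pred _ _ Hf) as Hfk. pose proof (pdiffn_pred _ _ Hg) as Hgk.
  destruct Hf as [Hf Hf'], Hg as [Hg Hg'].
  split; [apply pdiff_mul; auto|]. intros i Hi.
  replace (pd (fun y => f y * g y) i) with (fun y => pd f i y * g y + f y * pd g i y)
    by (extensionality y; symmetry; apply pd_mul; auto).
  apply pdiffn_add; apply IH; auto.
Qed.

Lemma pdiff_inf_pdiff F : pdiff_inf F -> pdiff F.
Proof. intro H. exact (H O). Qed.

Lemma pdiff_inf_pd F i : pdiff_inf F -> (i <= n)%nat -> pdiff_inf (pd F i).
Proof. intros H Hi k. exact (proj2 (H (S k)) i Hi). Qed.

Lemma pdiff_inf_const c : pdiff_inf (fun _ => c).
Proof. intro k. apply pdiffn_const. Qed.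

Lemma pdiff_inf_coord j : pdiff_inf (fun y => y j).
Proof. intro k. apply pdiffn_coord. Qed.

Lemma pdiff_inf_add f g : pdiff_inf f -> pdiff_inf g -> pdiff_inf (fun y => f y + g y).
Proof. intros Hf Hg k. apply pdiffn_add; auto. Qed.

Lemma pdiff_inf_mul f g : pdiff_inf f -> pdiff_inf g -> pdiff_inf (fun y => f y * g y).
Proof. intros Hf Hg k. apply pdiffn_mul; auto. Qed.

Lemma pdiff_inf_sub f g : pdiff_inf f -> pdiff_inf g -> pdiff_inf (fun y => f y - g y).
Proof.
  intros Hf Hg. replace (fun y => f y - g y) with (fun y => f y + (-1) * g y)
    by (extensionality y; ring).
  apply pdiff_inf_add, pdiff_inf_mul; auto using pdiff_inf_const.
Qed.

Lemma pdiff_inf_sum (F : nat -> Pt -> R) N :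
  (forall m, (m <= N)%nat -> pdiff_inf (F m)) ->
  pdiff_inf (fun y => sum_f_R0 (fun m => F m y) N).
Proof. intro H. induction N; simpl; auto using pdiff_inf_add. Qed.

Lemma pdiff_inf_of_smooth U : smooth n U -> pdiff_inf U.
Proof.
  intros H k. revert U H. induction k as [|k IH]; intros U H.
  - apply pdiff_intro. intros i y Hi. apply (proj2 (H nil (Forall_nil _))); auto.
  - split.
    + apply pdiff_intro. intros i y Hi. apply (proj2 (H nil (Forall_nil _))); auto.
    + intros i Hi. apply IH. intros l Hl.
      replace (iter_pd l (pd U i)) with (iter_pd (l ++ i :: nil) U)
        by (unfold iter_pd; rewrite fold_right_app; reflexivity).
      apply H, Forall_app; auto.
Qed.

Create HintDb pdiff.
#[local] Hint Resolve pdiff_inf_pdiff pdiff_inf_pd pdiff_inf_const pdiff_inf_coord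
  pdiff_inf_add pdiff_inf_mul pdiff_inf_sub : pdiff.

Definition ip (f g : Pt -> R) : Pt -> R := fun y => dot n (grad n f y) (grad n g y).

Definition pdiff_infV (V : Pt -> Pt) : Prop :=
  forall k, (k <= n)%nat -> pdiff_inf (fun y => V y k).

Lemma pdiff_inf_grad f k : pdiff_inf f -> (k <= n)%nat -> pdiff_inf (fun y => grad n f y k).
Proof. intros Hf Hk. unfold grad. auto 6 using pdiff_inf_sum with pdiff. Qed.

Lemma pdiff_infV_grad f : pdiff_inf f -> pdiff_infV (grad n f).
Proof. intros Hf k Hk. apply pdiff_inf_grad; auto. Qed.

Lemma pdiff_infV_scal f V : pdiff_inf f -> pdiff_infV V -> pdiff_infV (fun y k => f y * V y k).
Proof. intros Hf HV k Hk. auto with pdiff. Qed.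

Lemma pdiff_inf_ip f g : pdiff_inf f -> pdiff_inf g -> pdiff_inf (ip f g).
Proof.
  intros Hf Hg. unfold ip, dot. apply pdiff_inf_sum. intros k Hk.
  apply pdiff_inf_mul; apply pdiff_inf_grad; auto.
Qed.

Lemma pdiff_inf_div V : pdiff_infV V -> pdiff_inf (div n V).
Proof.
  intro HV. unfold div.
  apply pdiff_inf_sub; apply pdiff_inf_sum; intros i Hi; auto with pdiff.
  apply pdiff_inf_sum; intros j Hj; auto with pdiff.
Qed.

Lemma pdiff_inf_lap f : pdiff_inf f -> pdiff_inf (lap n f).
Proof. intro Hf. apply pdiff_inf_div, pdiff_infV_grad, Hf. Qed.

#[local] Hint Resolve pdiff_inf_grad pdiff_inf_ip pdiff_inf_lap pdiff_infV_grad
  pdiff_infV_scal : pdiff.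

Lemma grad_add f g y k : pdiff_inf f -> pdiff_inf g -> (k <= n)%nat ->
  grad n (fun y => f y + g y) y k = grad n f y k + grad n g y k.
Proof.
  intros Hf Hg Hk. unfold grad. rewrite pd_add by auto with pdiff.
  rewrite (sum_eq _ (fun j => y j * pd f j y + y j * pd g j y)), plus_sum; [ring|].
  intros j Hj. rewrite pd_add by auto with pdiff. ring.
Qed.

Lemma grad_mul f g y k : pdiff_inf f -> pdiff_inf g -> (k <= n)%nat ->
  grad n (fun y => f y * g y) y k = f y * grad n g y k + g y * grad n f y k.
Proof.
  intros Hf Hg Hk. unfold grad. rewrite pd_mul by auto with pdiff.
  rewrite (sum_eq _ (fun j => g y * (y j * pd f j y) + f y * (y j * pd g j y))).
  - rewrite plus_sum, !sum_mul_l. ring.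
  - intros j Hj. rewrite pd_mul by auto with pdiff. ring.
Qed.

Lemma grad_const c y k : grad n (fun _ => c) y k = 0.
Proof.
  unfold grad. rewrite pd_const, sum_eq_R0; [ring|].
  intros j _. rewrite pd_const. ring.
Qed.

Lemma grad_coord j y k : (j <= n)%nat ->
  grad n (fun y => y j) y k = (if Nat.eqb k j then 1 else 0) - y j * y k.
Proof.
  intro Hj. unfold grad. rewrite pd_coord, Nat.eqb_sym.
  rewrite (sum_eq _ (fun m => y m * (if Nat.eqb m j then 1 else 0))), sum_kronecker; auto.
  intros m _. rewrite pd_coord, Nat.eqb_sym. reflexivity.
Qed.

Lemma dot_sym a b : dot n a b = dot n b a.
Proof. unfold dot. apply sum_eq. intros; ring. Qed.

Lemma div_ext V W y : (forall z k, (k <= n)%nat -> V z k = W z k) -> div n V y = div n W y.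
Proof.
  intro H. unfold div. f_equal; apply sum_eq; intros i Hi.
  - f_equal. extensionality z. auto.
  - apply sum_eq. intros j _. do 2 f_equal. extensionality z. auto.
Qed.

Lemma div_add V W y : pdiff_infV V -> pdiff_infV W ->
  div n (fun z i => V z i + W z i) y = div n V y + div n W y.
Proof.
  intros HV HW. unfold div.
  rewrite (sum_eq (fun i => pd (fun z => V z i + W z i) i y)
                  (fun i => pd (fun z => V z i) i y + pd (fun z => W z i) i y))
    by (intros; apply pd_add; auto with pdiff).
  rewrite (sum_eq (fun i => sum_f_R0 (fun j => y i * y j * pd (fun z => V z i + W z i) j y) n)
     (fun i => sum_f_R0 (fun j => y i * y j * pd (fun z => V z i) j y) n
             + sum_f_R0 (fun j => y i * y j * pd (fun z => W z i) j y) n)).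
  - rewrite !plus_sum. ring.
  - intros i Hi. rewrite <- plus_sum. apply sum_eq. intros j Hj.
    rewrite pd_add by auto with pdiff. ring.
Qed.

Lemma div_mul f V y : pdiff_inf f -> pdiff_infV V ->
  div n (fun z i => f z * V z i) y = f y * div n V y + dot n (grad n f y) (V y).
Proof.
  intros Hf HV. unfold div, dot, grad.
  set (r := sum_f_R0 (fun j => y j * pd f j y) n).
  rewrite (sum_eq (fun i => pd (fun z => f z * V z i) i y)
                  (fun i => pd f i y * V y i + f y * pd (fun z => V z i) i y))
    by (intros; apply pd_mul; auto with pdiff).
  rewrite (sum_eq (fun i => sum_f_R0 (fun j => y i * y j * pd (fun z => f z * V z i) j y) n)
     (fun i => r * (y i * V y i) + f y * sum_f_R0 (fun j => y i * y j * pd (fun z => V z i) j y) n)).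
  - rewrite (sum_eq (fun i => (pd f i y - r * y i) * V y i)
                    (fun i => pd f i y * V y i - r * (y i * V y i))) by (intros; ring).
    rewrite !plus_sum, !minus_sum, !sum_mul_l. ring.
  - intros i Hi.
    rewrite (sum_eq _ (fun j => (y i * V y i) * (y j * pd f j y)
                               + f y * (y i * y j * pd (fun z => V z i) j y))).
    + rewrite plus_sum, !sum_mul_l. unfold r. ring.
    + intros j Hj. rewrite pd_mul by auto with pdiff. ring.
Qed.

Lemma div_mul_grad f g y : pdiff_inf f -> pdiff_inf g ->
  div n (fun z i => f z * grad n g z i) y = f y * lap n g y + ip f g y.
Proof. intros Hf Hg. apply div_mul; auto with pdiff. Qed.

Lemma ip_sym f g : ip f g = ip g f.
Proof. extensionality y. apply dot_sym. Qed.

Lemma ip_const_l c g : ip (fun _ => c) g = fun _ => 0.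
Proof.
  extensionality y. unfold ip, dot. apply sum_eq_R0. intros k _. rewrite grad_const. ring.
Qed.

Lemma ip_const_r c f : ip f (fun _ => c) = fun _ => 0.
Proof. rewrite ip_sym. apply ip_const_l. Qed.

Lemma ip_add_l f f' g : pdiff_inf f -> pdiff_inf f' ->
  ip (fun y => f y + f' y) g = fun y => ip f g y + ip f' g y.
Proof.
  intros Hf Hf'. extensionality y. unfold ip, dot. rewrite <- plus_sum.
  apply sum_eq. intros k Hk. rewrite grad_add by auto. ring.
Qed.

Lemma ip_add_r f g g' : pdiff_inf g -> pdiff_inf g' ->
  ip f (fun y => g y + g' y) = fun y => ip f g y + ip f g' y.
Proof. intros Hg Hg'. rewrite !(ip_sym f). apply ip_add_l; auto. Qed.

Lemma ip_mul_l f g h : pdiff_inf f -> pdiff_inf g ->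
  ip (fun y => f y * g y) h = fun y => f y * ip g h y + g y * ip f h y.
Proof.
  intros Hf Hg. extensionality y. unfold ip, dot. rewrite <- !sum_mul_l, <- plus_sum.
  apply sum_eq. intros k Hk. rewrite grad_mul by auto. ring.
Qed.

Lemma ip_mul_r f g h : pdiff_inf g -> pdiff_inf h ->
  ip f (fun y => g y * h y) = fun y => g y * ip f h y + h y * ip f g y.
Proof. intros Hg Hh. rewrite !(ip_sym f). apply ip_mul_l; auto. Qed.

Lemma ip_sum_l (F : nat -> Pt -> R) N h :
  (forall m, (m <= N)%nat -> pdiff_inf (F m)) ->
  ip (fun y => sum_f_R0 (fun m => F m y) N) h = fun y => sum_f_R0 (fun m => ip (F m) h y) N.
Proof.
  intro HF. induction N as [|N IH]; [reflexivity|]. simpl.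
  rewrite ip_add_l, IH; auto using pdiff_inf_sum.
Qed.

Lemma lap_const c : lap n (fun _ => c) = fun _ => 0.
Proof.
  extensionality y. unfold lap. rewrite (div_ext _ (fun z i => 0 * grad n (fun _ => c) z i)).
  - rewrite div_mul_grad by auto with pdiff. rewrite ip_const_l. ring.
  - intros z k _. rewrite grad_const. ring.
Qed.

Lemma lap_add f g : pdiff_inf f -> pdiff_inf g ->
  lap n (fun y => f y + g y) = fun y => lap n f y + lap n g y.
Proof.
  intros Hf Hg. extensionality y. unfold lap.
  rewrite (div_ext _ (fun z i => grad n f z i + grad n g z i)) by (intros; apply grad_add; auto).
  apply div_add; auto with pdiff.
Qed.

Lemma lap_mul f g : pdiff_inf f -> pdiff_inf g ->
  lap n (fun y => f y * g y) = fun y => f y * lap n g y + g y * lap n f y + 2 * ip f g y.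
Proof.
  intros Hf Hg. extensionality y. unfold lap at 1.
  rewrite (div_ext _ (fun z i => f z * grad n g z i + g z * grad n f z i))
    by (intros; apply grad_mul; auto).
  rewrite div_add, !div_mul_grad by auto with pdiff.
  rewrite (ip_sym g f). ring.
Qed.

Lemma ip_sub_l f f' g : pdiff_inf f -> pdiff_inf f' ->
  ip (fun y => f y - f' y) g = fun y => ip f g y - ip f' g y.
Proof.
  intros Hf Hf'. replace (fun y => f y - f' y) with (fun y => f y + (-1) * f' y)
    by (extensionality y; ring).
  rewrite ip_add_l, ip_mul_l, ip_const_l by auto with pdiff.
  extensionality y. ring.
Qed.

Lemma lap_sub f g : pdiff_inf f -> pdiff_inf g ->
  lap n (fun y => f y - g y) = fun y => lap n f y - lap n g y.
Proof.
  intros Hf Hg. replace (fun y => f y - g y) with (fun y => f y + (-1) * g y)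
    by (extensionality y; ring).
  rewrite lap_add, lap_mul, lap_const, ip_const_l by auto with pdiff.
  extensionality y. ring.
Qed.

Lemma lap_sum (F : nat -> Pt -> R) N :
  (forall m, (m <= N)%nat -> pdiff_inf (F m)) ->
  lap n (fun y => sum_f_R0 (fun m => F m y) N) = fun y => sum_f_R0 (fun m => lap n (F m) y) N.
Proof.
  intro HF. induction N as [|N IH]; [reflexivity|]. simpl.
  rewrite lap_add, IH; auto using pdiff_inf_sum.
Qed.

Definition c0 : R := (INR n - 4) / 16.
Definition d0 : R := (INR n - 1) / 4 * ((INR n - 4) / 4) ^ 2.
Definition e0 : R := INR n * (INR n - 1) / 8 * ((INR n - 4) / 4) ^ 3.

(* [Lcub] with both divergences expanded by [div (f grad g) = f lap g + ip f g];
   this form is additive in each argument. *)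
Definition Ltri (a b c : Pt -> R) (x : Pt) : R :=
  / 2 * (ip a b x * lap n c x + ip (ip a b) c x)
  - c0 * (a x * lap n (ip b c) x - lap n (fun y => b y * c y) x * lap n a x
          - ip (lap n (fun y => b y * c y)) a x)
  - d0 * (a x * lap n (fun y => b y * c y) x)
  + e0 * (a x * b x * c x).

Lemma Lcub_Ltri u x : pdiff_inf u -> Lcub n u x = Ltri u u u x.
Proof.
  intro Hu. unfold Lcub, Ltri, sq. cbv zeta. change (gsq n u) with (ip u u).
  replace (fun y => u y ^ 2) with (fun y => u y * u y) by (extensionality y; ring).
  rewrite !div_mul_grad by auto with pdiff.
  unfold c0, d0, e0. ring.
Qed.

Ltac expand :=
  repeat (first [ rewrite ip_sub_l by auto 10 with pdiff
                | rewrite lap_sub by auto 10 with pdiff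
                | rewrite ip_add_l by auto 10 with pdiff
                | rewrite ip_add_r by auto 10 with pdiff
                | rewrite ip_mul_l by auto 10 with pdiff
                | rewrite ip_mul_r by auto 10 with pdiff
                | rewrite ip_const_l | rewrite ip_const_r | rewrite lap_const
                | rewrite lap_add by auto 10 with pdiff
                | rewrite lap_mul by auto 10 with pdiff ]; cbv beta).

Section Additivity.
Variables a a' b c : Pt -> R.
Hypotheses (Ha : pdiff_inf a) (Ha' : pdiff_inf a') (Hb : pdiff_inf b) (Hc : pdiff_inf c).

Lemma Ltri_add_l x : Ltri (fadd a a') b c x = Ltri a b c x + Ltri a' b c x.
Proof. unfold Ltri, fadd. expand. ring. Qed.

Lemma Ltri_add_m x : Ltri b (fadd a a') c x = Ltri b a c x + Ltri b a' c x.
Proof. unfold Ltri, fadd. expand. ring. Qed.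

Lemma Ltri_add_r x : Ltri b c (fadd a a') x = Ltri b c a x + Ltri b c a' x.
Proof. unfold Ltri, fadd. expand. ring. Qed.

End Additivity.

Lemma pdiff_inf_fadd f g : pdiff_inf f -> pdiff_inf g -> pdiff_inf (fadd f g).
Proof. apply pdiff_inf_add. Qed.
#[local] Hint Resolve pdiff_inf_fadd : pdiff.

Lemma L3_Ltri a b c x : pdiff_inf a -> pdiff_inf b -> pdiff_inf c ->
  L3 n a b c x
  = / 6 * (Ltri a b c x + Ltri a c b x + Ltri b a c x
           + Ltri b c a x + Ltri c a b x + Ltri c b a x).
Proof.
  intros Ha Hb Hc. unfold L3. rewrite !Lcub_Ltri by auto with pdiff.
  repeat first [ rewrite Ltri_add_l by auto with pdiff
               | rewrite Ltri_add_m by auto with pdiff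
               | rewrite Ltri_add_r by auto with pdiff ].
  field.
Qed.

Definition mul_defect (u f : Pt -> R) (x : Pt) : R :=
  (3 * ip u u x + u x * lap n u x + 16 * c0 * (u x * lap n u x + ip u u x)
   - 8 * d0 * u x ^ 2) * ip f u x
  + ((1 + 4 * c0) * u x * ip (ip f u) u x
  + ((4 * c0 * u x * (u x * lap n u x + ip u u x) - 2 * d0 * u x ^ 3
      + ip u u x * u x / 2) * lap n f x
  + ((/ 2 - 2 * c0) * u x * ip f (ip u u) x
  + (2 * c0 * u x ^ 2 * ip f (lap n u) x
  + (- (2 * c0 * u x ^ 2) * lap n (ip f u) x
  + 2 * c0 * u x ^ 2 * ip (lap n f) u x))))).

Lemma Ltri_mul_defect u f x : pdiff_inf u -> pdiff_inf f ->
  Ltri (fun y => f y * u y) u u x + Ltri u (fun y => f y * u y) u x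
  + Ltri u u (fun y => f y * u y) x - 3 * f x * Ltri u u u x
  = mul_defect u f x.
Proof.
  intros Hu Hf. unfold Ltri, mul_defect. expand.
  rewrite (ip_sym u f), (ip_sym (ip u u) f), (ip_sym (lap n u) f), (ip_sym u (ip f u)).
  field.
Qed.

Lemma L3_mul_defect u f x : pdiff_inf u -> pdiff_inf f ->
  L3 n (fun y => f y * u y) u u x - f x * L3 n u u u x = / 3 * mul_defect u f x.
Proof.
  intros Hu Hf. rewrite <- Ltri_mul_defect, !L3_Ltri by auto with pdiff. field.
Qed.

Lemma trace_grad_grad u y :
  sum_f_R0 (fun k => grad n (fun z => grad n u z k) y k) n = lap n u y.
Proof.
  unfold lap, div. unfold grad at 1. rewrite minus_sum. f_equal. apply sum_eq. intros i _.
  rewrite Rmult_comm, <- sum_mul_l. apply sum_eq. intros. ring.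
Qed.

Definition norm2 (y : Pt) : R := sum_f_R0 (fun k => y k * y k) n.

(* [grad] is tangential only on the unit sphere: off it [radial g] need not
   vanish, and its derivatives enter the second-order terms. *)
Definition radial (g : Pt -> R) (y : Pt) : R := dot n y (grad n g y).

Lemma pdiff_inf_norm2 : pdiff_inf norm2.
Proof. apply pdiff_inf_sum. auto with pdiff. Qed.

Lemma pdiff_inf_radial g : pdiff_inf g -> pdiff_inf (radial g).
Proof. intro Hg. apply pdiff_inf_sum. auto with pdiff. Qed.

#[local] Hint Resolve pdiff_inf_norm2 pdiff_inf_radial : pdiff.

Lemma ip_coord k h : (k <= n)%nat ->
  ip (fun y => y k) h = fun y => grad n h y k - y k * radial h y.
Proof.
  intro Hk. extensionality y. unfold ip, radial. unfold dot at 1.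
  rewrite (sum_eq _ (fun j => grad n h y j * (if Nat.eqb j k then 1 else 0)
                             - y k * (y j * grad n h y j))).
  - rewrite minus_sum, sum_kronecker, sum_mul_l; auto.
  - intros j _. rewrite grad_coord by auto. ring.
Qed.

Lemma div_id y : div n (fun z k => z k) y = INR (S n) - norm2 y.
Proof.
  unfold div, norm2. rewrite (sum_eq _ (fun _ => 1)), sum_cte.
  - f_equal; [ring|]. apply sum_eq. intros i Hi.
    rewrite (sum_eq _ (fun j => (y i * y j) * (if Nat.eqb j i then 1 else 0))), sum_kronecker; auto.
    intros j _. rewrite pd_coord, Nat.eqb_sym. reflexivity.
  - intros i _. rewrite pd_coord, Nat.eqb_refl. reflexivity.
Qed.

Lemma lap_coord i : (i <= n)%nat ->
  lap n (fun y => y i) = fun y => - (INR n + 2) * y i + 2 * y i * norm2 y.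
Proof.
  intro Hi. extensionality y. unfold lap.
  rewrite (div_ext _ (fun z k => (if Nat.eqb k i then 1 else 0) + ((-1) * z i) * z k))
    by (intros; rewrite grad_coord; auto; ring).
  rewrite div_add, div_mul, div_id by (auto with pdiff; intros k _; auto with pdiff).
  replace (div n (fun _ k => if Nat.eqb k i then 1 else 0) y) with 0.
  - unfold dot, norm2. rewrite S_INR.
    rewrite (sum_eq (fun k => grad n (fun z => -1 * z i) y k * y k)
               (fun k => (-1) * (y k * (if Nat.eqb k i then 1 else 0)) + y i * (y k * y k))).
    + rewrite plus_sum, !sum_mul_l, sum_kronecker by auto. ring.
    + intros k Hk. rewrite grad_mul, grad_const, grad_coord by auto with pdiff. ring.
  - unfold div. rewrite !sum_eq_R0; [ring| |].
    + intros j _. apply sum_eq_R0. intros k _. rewrite pd_const. ring.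
    + intros j _. rewrite pd_const. reflexivity.
Qed.

Section OnSphere.
Variable x : Pt.
Hypothesis x_on_sphere : norm2 x = 1.

Lemma radial_sphere g : radial g x = 0.
Proof.
  unfold radial, dot, grad. unfold norm2 in x_on_sphere.
  set (s := sum_f_R0 (fun j => x j * pd g j x) n).
  rewrite (sum_eq _ (fun i => x i * pd g i x - s * (x i * x i))) by (intros; ring).
  rewrite minus_sum, sum_mul_l, x_on_sphere. unfold s. ring.
Qed.

Lemma ip_coord_sphere k h : (k <= n)%nat -> ip (fun y => y k) h x = grad n h x k.
Proof. intro Hk. rewrite ip_coord, radial_sphere by auto. ring. Qed.

Lemma sum_coord_ip_coord g :
  sum_f_R0 (fun i => x i * ip (fun y => y i) g x) n = 0.
Proof.
  rewrite <- (radial_sphere g). apply sum_eq. intros i Hi.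
  rewrite ip_coord_sphere; auto.
Qed.

Lemma ip_norm2_sphere u : ip norm2 u x = 0.
Proof.
  unfold norm2. rewrite ip_sum_l by (intros; auto with pdiff).
  rewrite (sum_eq _ (fun k => 2 * (x k * ip (fun y => y k) u x))).
  - rewrite sum_mul_l, sum_coord_ip_coord. ring.
  - intros k _. rewrite ip_mul_l by auto with pdiff. ring.
Qed.

Lemma sum_coord_lap_coord : sum_f_R0 (fun i => x i * lap n (fun y => y i) x) n = - INR n.
Proof.
  rewrite (sum_eq _ (fun i => - INR n * (x i * x i))).
  - rewrite sum_mul_l. change (sum_f_R0 (fun i => x i * x i) n) with (norm2 x).
    rewrite x_on_sphere. ring.
  - intros i Hi. rewrite lap_coord, x_on_sphere by auto. ring.
Qed.

Lemma sum_coord_ip_lap_coord u : pdiff_inf u ->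
  sum_f_R0 (fun i => x i * ip (lap n (fun y => y i)) u x) n = 0.
Proof.
  intro Hu. rewrite (sum_eq _ (fun i => (2 - (INR n + 2)) * (x i * ip (fun y => y i) u x)
                                       + 2 * ip norm2 u x * (x i * x i))).
  - rewrite plus_sum, !sum_mul_l, sum_coord_ip_coord, ip_norm2_sphere. ring.
  - intros i Hi. rewrite lap_coord by auto. expand. rewrite x_on_sphere. ring.
Qed.

Lemma ip_radial_sphere u : pdiff_inf u ->
  ip (radial u) u x = sum_f_R0 (fun k => x k * ip (fun y => grad n u y k) u x) n + ip u u x.
Proof.
  intro Hu. unfold radial, dot at 1. rewrite ip_sum_l by (intros; auto with pdiff).
  unfold ip at 3, dot. rewrite <- plus_sum. apply sum_eq. intros k Hk.
  rewrite ip_mul_l, ip_coord_sphere by auto with pdiff. ring.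
Qed.

Lemma sum_coord_ip_ip_coord u : pdiff_inf u ->
  sum_f_R0 (fun i => x i * ip (ip (fun y => y i) u) u x) n = - ip u u x.
Proof.
  intro Hu.
  rewrite (sum_eq _ (fun i => x i * ip (fun y => grad n u y i) u x
                               - ip (radial u) u x * (x i * x i))).
  - rewrite minus_sum, sum_mul_l. change (sum_f_R0 (fun i => x i * x i) n) with (norm2 x).
    rewrite x_on_sphere, ip_radial_sphere by auto. ring.
  - intros i Hi. rewrite ip_coord by auto. expand. rewrite radial_sphere. ring.
Qed.

Lemma lap_radial_sphere u : pdiff_inf u ->
  lap n (radial u) x
  = sum_f_R0 (fun k => x k * lap n (fun y => grad n u y k) x) n + 2 * lap n u x.
Proof.
  intro Hu. unfold radial at 1, dot. rewrite lap_sum by (intros; auto with pdiff).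
  rewrite (sum_eq _ (fun k => x k * lap n (fun y => grad n u y k) x
                             - INR n * (x k * grad n u x k)
                             + 2 * grad n (fun y => grad n u y k) x k)).
  - rewrite plus_sum, minus_sum, !sum_mul_l, trace_grad_grad.
    change (sum_f_R0 (fun k => x k * grad n u x k) n) with (radial u x).
    rewrite radial_sphere. ring.
  - intros k Hk. rewrite lap_mul by auto with pdiff. cbv beta.
    rewrite lap_coord, ip_coord_sphere, x_on_sphere by auto. ring.
Qed.

Lemma sum_coord_lap_ip_coord u : pdiff_inf u ->
  sum_f_R0 (fun i => x i * lap n (ip (fun y => y i) u) x) n = -2 * lap n u x.
Proof.
  intro Hu.
  rewrite (sum_eq _ (fun i => x i * lap n (fun y => grad n u y i) x
                               - lap n (radial u) x * (x i * x i)
                               - 2 * (x i * ip (fun y => y i) (radial u) x))).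
  - rewrite !minus_sum, !sum_mul_l, sum_coord_ip_coord.
    change (sum_f_R0 (fun i => x i * x i) n) with (norm2 x).
    rewrite x_on_sphere, lap_radial_sphere by auto. ring.
  - intros i Hi. rewrite ip_coord by auto. expand. rewrite radial_sphere. ring.
Qed.

End OnSphere.

End SphereCalculus.

Theorem theorem1p4 (n : nat) (Hn : (3 <= n)%nat) (U : Pt -> R) (HU : smooth n U)
  (x : Pt) (Hx0 : forall k, (n < k)%nat -> x k = 0)
  (Hx : sum_f_R0 (fun i => x i ^ 2) n = 1) :
  sum_f_R0 (fun i => x i * (L3 n (fun y => y i * U y) U U x - x i * L3 n U U U x)) n
  = (INR n - 1) / 3 * U x * sigma1 n U x.
Proof.
  pose proof (pdiff_inf_of_smooth n U HU) as Hu.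
  assert (Hsphere : norm2 n x = 1) by (rewrite <- Hx; apply sum_eq; intros; ring).
  rewrite (sum_eq _ (fun i => x i * (/ 3 * mul_defect n U (fun y => y i) x))) by
    (intros i _; rewrite <- L3_mul_defect by auto using pdiff_inf_coord; reflexivity).
  unfold mul_defect.
  rewrite sum_mul_scal, !sum_mul_lincomb, sum_mul_scal.
  rewrite !sum_coord_ip_coord, sum_coord_ip_ip_coord, sum_coord_lap_coord,
    sum_coord_lap_ip_coord, sum_coord_ip_lap_coord by auto.
  unfold sigma1, sq. cbv zeta. change (gsq n U x) with (ip n U U x).
  replace (fun y => U y ^ 2) with (fun y => U y * U y) by (extensionality y; ring).
  rewrite lap_mul by auto.
  unfold c0, d0. field.
Qed.
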